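(* Let $\tilde{A}\in\mathbb{Q}^{q\times n}$, $\tilde{b}\in\mathbb{Q}^q$ be the constraint data of the LP relaxation $P=\{x:\tilde{A}x\ge\tilde{b}\}=\{x: Ax\ge b,\ x\ge 0,\ x_j\le 1,\ j=1,\dots,p\}$ ($q=m+n+p$, $Q=\{1,\dots,q\}$), and let $T$ be a finite index set with $D^t\in\mathbb{Q}^{r\times n}$, $d_0^t\in\mathbb{Q}^r$ for $t\in T$. Let $\bar{w}=(\bar{\alpha},\bar{\beta},\{\bar{u}^t,\bar{v}^t\}_{t\in T})$ be a feasible solution of the CGLP system that is not basic, and suppose the submatrix $\tilde{A}_N$ of $\tilde{A}$ with rows indexed by $N=N(\bar{u}):=\{j\in Q:\bar{u}^t_j>0\text{ for some }t\in T\}$ has full row rank. Then the inequality $\bar{\alpha}x\ge\bar{\beta}$ is valid for the closure of regular cuts.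
   Context: The CGLP system consists of variables $\alpha\in\mathbb{R}^n$, $\beta\in\mathbb{R}$, $u^t\in\mathbb{R}^q$, $v^t\in\mathbb{R}^r$ ($t\in T$) and constraints: $\alpha-u^t\tilde{A}-v^tD^t=0$ and $\beta-u^t\tilde{b}-v^td_0^t=0$ for all $t\in T$; $\sum_{t\in T}\sum_{i=1}^q u^t_i+\sum_{t\in T}\sum_{i=1}^r v^t_i=1$; $u^t,v^t\ge 0$ for all $t\in T$. A basic feasible solution of this system is regular if there exists $J\subseteq Q$, $|J|=n$, with the $n\times n$ submatrix $\tilde{A}_J$ nonsingular and $u^t_j=0$ for all $j\notin J$, $t\in T$. A cut $\alpha x\ge\beta$ is regular if there is a regular basic feasible solution of the CGLP system whose $(\alpha,\beta)$-component equals $(\alpha,\beta)$ up to a positive scalar multiple. The closure of regular cuts is the set of points $x\in P$ satisfying every regular cut. *)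

From HB Require Import structures.
From mathcomp Require Import all_boot all_order all_algebra.
Set Implicit Arguments. Unset Strict Implicit. Unset Printing Implicit Defensive.
Import Order.TTheory GRing.Theory Num.Theory.
Local Open Scope ring_scope.

(* The LP relaxation data  P = {x : A x >= b, x >= 0, x_j <= 1 (j < p)}
   written as  tildeA x >= tildeb  with q = m + (n + p) rows:
   rows of A, then the n rows x_j >= 0, then the p rows -x_j >= -1. *)
Definition tildeA (R : ringType) (m n p : nat) (A : 'M[R]_(m, n))
  : 'M[R]_(m + (n + p), n) :=
  col_mx A (col_mx (1%:M : 'M[R]_n)
                   (\matrix_(i < p, j < n) if (i : nat) == j then -1 else 0)).

Definition tildeb (R : ringType) (m n p : nat) (b : 'cV[R]_m)
  : 'cV[R]_(m + (n + p)) :=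
  col_mx b (col_mx (0 : 'cV[R]_n) (const_mx (-1) : 'cV[R]_p)).

Record cglp_var (R : ringType) (T : finType) (q n r : nat) := CglpVar {
  alpha : 'rV[R]_n;
  beta  : R;
  uu    : T -> 'rV[R]_q;
  vv    : T -> 'rV[R]_r }.

Section CGLP.
Variables (R : realFieldType) (T : finType) (q n r : nat).
Variables (At : 'M[R]_(q, n)) (bt : 'cV[R]_q)
          (D : T -> 'M[R]_(r, n)) (d0 : T -> 'cV[R]_r).

(* The equality constraints of the CGLP system, with normalization
   right-hand side c (c = 1 for the CGLP itself, c = 0 for its
   homogeneous part). *)
Definition cglp_eqs (c : R) (w : cglp_var R T q n r) : Prop :=
  (forall t, alpha w - uu w t *m At - vv w t *m D t = 0) /\
  (forall t, beta w - (uu w t *m bt) 0 0 - (vv w t *m d0 t) 0 0 = 0) /\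
  (\sum_(t : T) \sum_(i < q) uu w t 0 i + \sum_(t : T) \sum_(i < r) vv w t 0 i
     = c).

Definition cglp_feasible (w : cglp_var R T q n r) : Prop :=
  cglp_eqs 1 w /\
  (forall t i, 0 <= uu w t 0 i) /\ (forall t i, 0 <= vv w t 0 i).

Definition cglp_zero (d : cglp_var R T q n r) : Prop :=
  alpha d = 0 /\ beta d = 0 /\ (forall t, uu d t = 0) /\ (forall t, vv d t = 0).

(* Basic feasible solution: feasible, and the constraints active at w
   (all equalities and the tight nonnegativity constraints) have full
   rank, i.e. the only direction annihilated by all of them is 0. *)
Definition cglp_basic (w : cglp_var R T q n r) : Prop :=
  cglp_feasible w /\
  forall d : cglp_var R T q n r,
    cglp_eqs 0 d ->
    (forall t i, uu w t 0 i = 0 -> uu d t 0 i = 0) ->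
    (forall t i, vv w t 0 i = 0 -> vv d t 0 i = 0) ->
    cglp_zero d.

(* Regular basic feasible solution: J = image of an injective f : 'I_n -> 'I_q
   (so |J| = n), tildeA_J nonsingular, u^t_j = 0 for j not in J. *)
Definition cglp_regular_bfs (w : cglp_var R T q n r) : Prop :=
  cglp_basic w /\
  exists f : 'I_n -> 'I_q,
    injective f /\ rowsub f At \in unitmx /\
    (forall t j, (forall i, f i != j) -> uu w t 0 j = 0).

Definition regular_cut (a : 'rV[R]_n) (b0 : R) : Prop :=
  exists w, cglp_regular_bfs w /\
    exists lam : R, 0 < lam /\ alpha w = lam *: a /\ beta w = lam * b0.

Definition in_P (x : 'cV[R]_n) : Prop :=
  forall i, bt i 0 <= (At *m x) i 0.

Definition in_regular_closure (x : 'cV[R]_n) : Prop :=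
  in_P x /\ forall a b0, regular_cut a b0 -> b0 <= (a *m x) 0 0.

Definition Nset (w : cglp_var R T q n r) : {set 'I_q} :=
  [set j | [exists t, 0 < uu w t 0 j]].

End CGLP.

Definition subrows (R : Type) (q n : nat) (N : {set 'I_q}) (M : 'M[R]_(q, n))
  : 'M[R]_(#|N|, n) :=
  \matrix_(i < #|N|, j < n) M (enum_val i) j.

From HB Require Import structures.
From mathcomp Require Import all_boot all_order all_algebra.
From mathcomp Require Import ring.
From Stdlib Require Import Classical.
Set Implicit Arguments. Unset Strict Implicit. Unset Printing Implicit Defensive.
Import Order.TTheory GRing.Theory Num.Theory.
Local Open Scope ring_scope.

(* If [w] is basic, the rows of [tildeA] indexed by [N(u)] are independent and
   [tildeA] has rank [n] (it contains the identity), so [N(u)] extends to a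
   nonsingular row basis [J]: [w] is then a regular basic solution, and
   [alpha x >= beta] is itself a regular cut.  Otherwise a nonzero direction [d]
   preserves the CGLP equations and the tight sign constraints of [w].  Moving
   along [d] or [-d], whichever does not decrease the violation
   [beta - alpha x], until a ratio test zeroes a coordinate yields a feasible
   solution with strictly smaller support and smaller [N(u)], so [tildeA_N]
   keeps full row rank; induct on the size of the support. *)

Section FreeRows.
Variables (R : fieldType) (q n : nat) (M : 'M[R]_(q, n)).
Implicit Types S J N : {set 'I_q}.

Definition free_rows S : Prop := forall y : 'rV[R]_q,
  (forall j, j \notin S -> y 0 j = 0) -> y *m M = 0 -> y = 0.

Lemma free_rowsS S S' : S' \subset S -> free_rows S -> free_rows S'.
Proof.
move=> sS'S freeS y yS'; apply: freeS => j jS; apply: yS'.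
by apply: contra jS; apply: (subsetP sS'S).
Qed.

Lemma row_sub_subrows S j : j \in S -> (row j M <= subrows S M)%MS.
Proof.
move=> jS; rewrite -(enum_rankK_in jS jS) -[subrows S M]/(rowsub enum_val M).
by rewrite -row_rowsub row_sub.
Qed.

Lemma mulmx_subrows S (y : 'rV[R]_q) : (forall j, j \notin S -> y 0 j = 0) ->
  (\row_(i < #|S|) y 0 (enum_val i)) *m subrows S M = y *m M.
Proof.
move=> yS; apply/rowP => k; rewrite !mxE (bigID (mem S)) /= [X in _ + X]big1.
  by rewrite addr0 [RHS]big_enum_val; apply: eq_bigr => i _; rewrite !mxE.
by move=> j /yS ->; rewrite mul0r.
Qed.

Lemma row_free_subrowsP S : row_free (subrows S M) <-> free_rows S.
Proof.
split=> [freeMS y yS yM0 | freeS].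
  have z0 : \row_(i < #|S|) y 0 (enum_val i) = 0.
    by apply: (row_free_inj freeMS); rewrite /= mulmx_subrows // yM0 mul0mx.
  apply/rowP => j; rewrite mxE; have [jS | /yS //] := boolP (j \in S).
  by have /rowP/(_ (enum_rank_in jS j)) := z0; rewrite !mxE enum_rankK_in.
apply: inj_row_free => z zMS0.
pose y := \row_j \sum_(i | enum_val i == j) z 0 i.
have yE (i : 'I_#|S|) : y 0 (enum_val i) = z 0 i.
  by rewrite mxE (big_pred1 i) // => i'; rewrite (inj_eq enum_val_inj).
have yS j : j \notin S -> y 0 j = 0.
  move=> jS; rewrite mxE big_pred0 // => i; apply: contraNF jS => /eqP <-.
  exact: enum_valP.
have y0 : y = 0.
  apply: freeS => //; rewrite -(mulmx_subrows yS).
  by rewrite -[RHS]zMS0; congr (_ *m _); apply/rowP => i; rewrite mxE yE.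
by apply/rowP => i; rewrite -yE y0 !mxE.
Qed.

Lemma free_rowsU1 J j :
  free_rows J -> ~~ (row j M <= subrows J M)%MS -> free_rows (j |: J).
Proof.
move=> freeJ notin y yJ yM0.
suff yj0 : y 0 j = 0.
  apply: freeJ => // l lJ; have [->//|lj] := eqVneq l j.
  by apply: yJ; rewrite !inE negb_or lj.
apply: contraNeq notin => yj.
have : \sum_l y 0 l *: row l M = 0 by rewrite -mulmx_sum_row.
rewrite (bigD1 j) //= => /(canRL (addrK _)) /(canRL (scalerK yj)) ->.
rewrite sub0r scalerN eqmx_opp scalemx_sub // summx_sub // => l lj.
have [lJ | lJ] := boolP (l \in J); first by rewrite scalemx_sub ?row_sub_subrows.
by rewrite yJ ?scale0r ?sub0mx // !inE negb_or lj.
Qed.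

Lemma free_rows_extend N : \rank M = n -> free_rows N ->
  exists f : 'I_n -> 'I_q,
    [/\ injective f, rowsub f M \in unitmx & {subset N <= codom f}].
Proof.
move=> rankM freeN.
pose P J := (N \subset J) && row_free (subrows J M).
have PN : P N by rewrite /P subxx; apply/row_free_subrowsP.
have [J /andP[NJ freeJ] maxJ] := arg_maxnP (fun J => #|J|) PN.
have spanJ : (M <= subrows J M)%MS.
  apply/row_subP => j; have [jJ | jJ] := boolP (j \in J).
    exact: row_sub_subrows.
  apply: contraT => notin; have /maxJ : P (j |: J).
    rewrite /P (subset_trans NJ (subsetUr _ _)).
    by apply/row_free_subrowsP/free_rowsU1 => //; apply/row_free_subrowsP.
  by rewrite cardsU1 jJ add1n /= ltnn.
have cardJ : #|J| = n.
  move/eqP: freeJ => rankJ; apply/anti_leq.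
  by rewrite -{1}rankJ rank_leq_col -{1}rankM -rankJ mxrankS.
exists (enum_val \o cast_ord (esym cardJ)); split.
- by move=> i i' /enum_val_inj /cast_ord_inj.
- by rewrite -row_free_unit rowsub_comp rowsub_cast row_free_castmx.
- move=> j jN; have jJ := subsetP NJ j jN; apply/codomP.
  exists (cast_ord cardJ (enum_rank_in jJ j)).
  by rewrite /= cast_ordK enum_rankK_in.
Qed.
End FreeRows.

Lemma addrBB_scale (R : pzRingType) (V : lmodType R) (mu : R) (a b c a' b' c' : V) :
  a + mu *: a' - (b + mu *: b') - (c + mu *: c') = a - b - c + mu *: (a' - b' - c').
Proof. by rewrite !opprD (addrACA a) (addrACA (a - b)) !scalerBr. Qed.

Lemma ratio_test (R : realFieldType) (I : finType) (w g : I -> R) :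
    (forall i, 0 <= w i) -> (forall i, w i = 0 -> g i = 0) -> (exists i, g i < 0) ->
  exists2 lam, 0 <= lam &
    (forall i, 0 <= w i + lam * g i) /\
    [set i | w i + lam * g i != 0] \proper [set i | w i != 0].
Proof.
move=> w_ge0 g_supp [i0 gi0_lt0].
have w_gt0 i : g i < 0 -> 0 < w i.
  rewrite lt0r w_ge0 andbT => gi_lt0.
  by apply: contraTneq gi_lt0 => /g_supp ->; rewrite ltxx.
pose ratio i := w i / - g i.
have [k gk_lt0 ratio_min] := @arg_minP _ _ _ i0 (fun i => g i < 0) ratio gi0_lt0.
have ratio_ge0 : 0 <= ratio k by rewrite divr_ge0 ?w_ge0 // oppr_ge0 ltW.
exists (ratio k) => //; split.
  move=> i; have [gi_ge0 | gi_lt0] := leP 0 (g i).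
    exact: addr_ge0 (w_ge0 i) (mulr_ge0 ratio_ge0 gi_ge0).
  have := ratio_min i gi_lt0.
  by rewrite [X in _ <= X]/ratio ler_pdivlMr ?oppr_gt0 // mulrN -subr_ge0 opprK.
apply/properP; split.
  apply/subsetP => i; rewrite !inE; apply: contra => /eqP wi0.
  by rewrite wi0 g_supp // mulr0 addr0.
exists k; first by rewrite inE gt_eqF ?w_gt0.
by rewrite inE negbK /ratio invrN mulrN mulNr divfK ?subrr ?ltr0_neq0.
Qed.

Lemma neg_term_of_sumr_eq0 (R : realDomainType) (I : finType) (g : I -> R) i0 :
  \sum_i g i = 0 -> g i0 != 0 -> exists i, g i < 0.
Proof.
move=> sum_g0 gi0; apply/existsP; apply: contraNT gi0 => /existsPn g_nlt0.
have g_ge0 i : 0 <= g i by rewrite leNgt g_nlt0.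
by apply/eqP; apply: (psumr_eq0P (fun i _ => g_ge0 i) sum_g0).
Qed.

Section Cglp.
Variables (R : realFieldType) (T : finType) (q n r : nat).
Variables (At : 'M[R]_(q, n)) (bt : 'cV[R]_q)
          (D : T -> 'M[R]_(r, n)) (d0 : T -> 'cV[R]_r).
Local Notation V := (cglp_var R T q n r).

Definition cglp_shift (w : V) (mu : R) (d : V) : V :=
  CglpVar (alpha w + mu *: alpha d) (beta w + mu * beta d)
    (fun t => uu w t + mu *: uu d t) (fun t => vv w t + mu *: vv d t).

Definition cglp_index := ((T * 'I_q) + (T * 'I_r))%type.

Definition cglp_coord (w : V) (c : cglp_index) : R :=
  match c with inl (t, j) => uu w t 0 j | inr (t, j) => vv w t 0 j end.

Lemma sum_cglp_coord (w : V) :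
  \sum_(t : T) \sum_(i < q) uu w t 0 i + \sum_(t : T) \sum_(i < r) vv w t 0 i
  = \sum_c cglp_coord w c.
Proof. by rewrite big_sumType !pair_big; congr (_ + _); apply: eq_bigr => -[]. Qed.

Lemma cglp_coord_shift w mu d c :
  cglp_coord (cglp_shift w mu d) c = cglp_coord w c + mu * cglp_coord d c.
Proof. by case: c => -[t j]; rewrite /= !mxE. Qed.

Lemma cglp_eqs_shift c1 c2 w mu d :
  cglp_eqs At bt D d0 c1 w -> cglp_eqs At bt D d0 c2 d ->
  cglp_eqs At bt D d0 (c1 + mu * c2) (cglp_shift w mu d).
Proof.
move=> [wA [wb wsum]] [dA [db dsum]]; split; [|split] => [t|t|].
- by rewrite /= !mulmxDl -!scalemxAl addrBB_scale wA dA scaler0 addr0.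
- move: (wb t) (db t); rewrite /= !mulmxDl -!scalemxAl !mxE => {}wb {}db.
  by rewrite (addrBB_scale (V := R^o)) wb db scaler0 addr0.
- rewrite sum_cglp_coord; under eq_bigr do rewrite cglp_coord_shift.
  by rewrite big_split -mulr_sumr -!sum_cglp_coord wsum dsum.
Qed.

Lemma cglp_feasibleE w :
  cglp_feasible At bt D d0 w <->
  cglp_eqs At bt D d0 1 w /\ forall c, 0 <= cglp_coord w c.
Proof.
split=> [[eqs_w [u_ge0 v_ge0]] | [eqs_w coord_ge0]]; split=> //.
  by case=> -[t j]; [apply: u_ge0 | apply: v_ge0].
by split=> t j; [apply: (coord_ge0 (inl (t, j))) | apply: (coord_ge0 (inr (t, j)))].
Qed.

Definition cglp_support (w : V) : {set cglp_index} := [set c | cglp_coord w c != 0].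

Definition cut_violation (x : 'cV[R]_n) (w : V) : R := beta w - (alpha w *m x) 0 0.

Lemma cut_violation_shift x w mu d :
  cut_violation x (cglp_shift w mu d) = cut_violation x w + mu * cut_violation x d.
Proof.
rewrite /cut_violation /= mulmxDl -scalemxAl.
by move: (alpha w *m x) (alpha d *m x) => a b; rewrite !mxE; ring.
Qed.

Lemma Nset_subset w w' : cglp_feasible At bt D d0 w ->
  cglp_support w' \subset cglp_support w -> Nset w' \subset Nset w.
Proof.
move=> [_ [u_ge0 _]] supp_w'w; apply/subsetP => j; rewrite !inE.
case/existsP => t u'_gt0; apply/existsP; exists t.
have : inl (t, j) \in cglp_support w' by rewrite inE gt_eqF.
by move/(subsetP supp_w'w); rewrite inE lt0r u_ge0 andbT.
Qed.

(* [t0] matters: for empty [T] the equations leave [alpha] and [beta] free. *)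
Lemma cglp_zero_of_coord (t0 : T) d : cglp_eqs At bt D d0 0 d ->
  (forall c, cglp_coord d c = 0) -> cglp_zero d.
Proof.
move=> [dA [db _]] coord0.
have u0 t : uu d t = 0.
  by apply/rowP => j; rewrite mxE; apply: (coord0 (inl (t, j))).
have v0 t : vv d t = 0.
  by apply/rowP => j; rewrite mxE; apply: (coord0 (inr (t, j))).
by move: (dA t0) (db t0); rewrite u0 v0 !mul0mx !mxE !subr0.
Qed.

Lemma nonbasic_direction w :
  cglp_feasible At bt D d0 w -> ~ cglp_basic At bt D d0 w ->
  exists d, [/\ cglp_eqs At bt D d0 0 d,
    cglp_support d \subset cglp_support w & cglp_support d != set0].
Proof.
move=> feas_w nbasic_w.
have [d [eqs_d [u_supp [v_supp nzero_d]]]] : exists d, cglp_eqs At bt D d0 0 d /\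
    (forall t i, uu w t 0 i = 0 -> uu d t 0 i = 0) /\
    (forall t i, vv w t 0 i = 0 -> vv d t 0 i = 0) /\ ~ cglp_zero d.
  apply: NNPP => no_d; apply: nbasic_w; split=> // d eqs_d u_supp v_supp.
  by apply: NNPP => nzero_d; apply: no_d; exists d.
exists d; split=> //.
  apply/subsetP => c; rewrite !inE; apply: contra_neq.
  by case: c => -[t j] /=; [apply: u_supp | apply: v_supp].
have [c0 _] : exists c, cglp_coord w c != 0.
  apply/existsP; apply: contraT => /existsPn coord0.
  have := feas_w.1.2.2; rewrite sum_cglp_coord big1 => [/esym/eqP|c _].
    by rewrite oner_eq0.
  exact/eqP/negPn/coord0.
pose t0 := match c0 with inl (t, _) | inr (t, _) => t end.
apply: contra_notN nzero_d => /eqP supp_d0; apply: (cglp_zero_of_coord t0) => // c.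
by apply/eqP; apply: contraFT (in_set0 c) => coord_c; rewrite -supp_d0 inE.
Qed.

Lemma cglp_improve x w d :
  cglp_feasible At bt D d0 w -> cglp_eqs At bt D d0 0 d ->
  cglp_support d \subset cglp_support w -> cglp_support d != set0 ->
  exists w', [/\ cglp_feasible At bt D d0 w',
    cglp_support w' \proper cglp_support w &
    cut_violation x w <= cut_violation x w'].
Proof.
move=> /cglp_feasibleE[eqs_w w_ge0] eqs_d supp_dw /set0Pn[c0 supp_c0].
pose s : R := if 0 <= cut_violation x d then 1 else -1.
have s_neq0 : s != 0 by rewrite /s; case: ifP; rewrite ?oppr_eq0 oner_eq0.
have s_viol : 0 <= s * cut_violation x d.
  rewrite /s; case: ifP => [|/negbT]; rewrite ?mul1r //.
  by rewrite -ltNge mulN1r oppr_ge0 => /ltW.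
pose g c := s * cglp_coord d c.
have g_supp c : cglp_coord w c = 0 -> g c = 0.
  move=> coord_w0; rewrite /g; suff -> : cglp_coord d c = 0 by rewrite mulr0.
  have : c \notin cglp_support w by rewrite inE coord_w0 eqxx.
  by apply: contraNeq => coord_d; apply: (subsetP supp_dw); rewrite inE.
have [c1 gc1] : exists c, g c < 0.
  apply: (neg_term_of_sumr_eq0 (i0 := c0)).
    by rewrite -mulr_sumr -sum_cglp_coord eqs_d.2.2 mulr0.
  by rewrite mulf_neq0 //; rewrite inE in supp_c0.
have [lam lam_ge0 [w'_ge0 w'_supp]] := ratio_test w_ge0 g_supp (ex_intro _ c1 gc1).
pose w' := cglp_shift w (s * lam) d.
have coord_w' c : cglp_coord w' c = cglp_coord w c + lam * g c.
  by rewrite cglp_coord_shift /g mulrA (mulrC lam).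
exists w'; split.
- apply/cglp_feasibleE; split; last by move=> c; rewrite coord_w'.
  by have := cglp_eqs_shift (s * lam) eqs_w eqs_d; rewrite mulr0 addr0.
- suff -> : cglp_support w' = [set c | cglp_coord w c + lam * g c != 0] by [].
  by apply/setP => c; rewrite !inE coord_w'.
- by rewrite cut_violation_shift mulrAC lerDl mulr_ge0.
Qed.

End Cglp.

Section RegularClosure.
Variables (R : realFieldType) (T : finType) (q n r : nat).
Variables (At : 'M[R]_(q, n)) (bt : 'cV[R]_q)
          (D : T -> 'M[R]_(r, n)) (d0 : T -> 'cV[R]_r).
Hypothesis rankAt : \rank At = n.

Lemma regular_bfs_of_basic w : cglp_basic At bt D d0 w ->
  free_rows At (Nset w) -> cglp_regular_bfs At bt D d0 w.
Proof.
move=> basic_w freeN.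
have [f [f_inj f_unit N_codom]] := free_rows_extend rankAt freeN.
split=> //; exists f; split=> //; split=> // t j j_notin_f.
have [_ [u_ge0 _]] := basic_w.1.
apply/eqP; apply: contraT => u_neq0.
have /N_codom /codomP[i fij] : j \in Nset w.
  by rewrite inE; apply/existsP; exists t; rewrite lt0r u_neq0 u_ge0.
by have := j_notin_f i; rewrite fij eqxx.
Qed.

Lemma cut_violation_le0 x w : in_regular_closure At bt D d0 x ->
  cglp_feasible At bt D d0 w -> free_rows At (Nset w) -> cut_violation x w <= 0.
Proof.
move=> [_ x_regular]; have [k] := ubnP #|cglp_support w|.
elim: k w => // k IH w; rewrite ltnS => supp_w feas_w freeN.
have [basic_w | nbasic_w] := classic (cglp_basic At bt D d0 w).
  rewrite subr_le0; apply: x_regular; exists w.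
  by split; [exact: regular_bfs_of_basic | exists 1; rewrite ltr01 scale1r mul1r].
have [d [eqs_d supp_dw supp_d]] := nonbasic_direction feas_w nbasic_w.
have [w' [feas_w' supp_w' viol_w']] := cglp_improve x feas_w eqs_d supp_dw supp_d.
apply: le_trans viol_w' (IH w' _ feas_w' _).
  exact: leq_trans (proper_card supp_w') supp_w.
exact: free_rowsS (Nset_subset feas_w (proper_sub supp_w')) freeN.
Qed.

End RegularClosure.

Lemma mxrank_tildeA (R : fieldType) (m n p : nat) (A : 'M[R]_(m, n)) :
  \rank (tildeA p A) = n.
Proof.
apply/anti_leq; rewrite rank_leq_col -{1}(mxrank1 R n) mxrankS // /tildeA.
by rewrite -addsmxE (submx_trans _ (addsmxSr _ _)) // -addsmxE addsmxSl.
Qed.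

Theorem corollary1 (R : realFieldType) (m n p r : nat) (T : finType)
    (A : 'M[rat]_(m, n)) (b : 'cV[rat]_m)
    (D : T -> 'M[rat]_(r, n)) (d0 : T -> 'cV[rat]_r)
    (w : cglp_var R T (m + (n + p)) n r) :
  (p <= n)%N ->
  let At := map_mx (@ratr R) (tildeA p A) in
  let bt := map_mx (@ratr R) (tildeb n p b) in
  let Dt := fun t => map_mx (@ratr R) (D t) in
  let d0t := fun t => map_mx (@ratr R) (d0 t) in
  cglp_feasible At bt Dt d0t w ->
  ~ cglp_basic At bt Dt d0t w ->
  row_free (subrows (Nset w) At) ->
  forall x : 'cV[R]_n,
    in_regular_closure At bt Dt d0t x -> beta w <= (alpha w *m x) 0 0.
Proof.
move=> _ At bt Dt d0t feas_w _ /row_free_subrowsP freeN x x_closure.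
rewrite -subr_le0; apply: cut_violation_le0 x_closure feas_w freeN.
by rewrite mxrank_map mxrank_tildeA.
Qed.
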